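(* Let $f(x|\theta,\sigma,m)=\frac{2}{\sigma}\varphi\!\left(\frac{x-\theta}{\sigma}\right)\Phi\!\left(\frac{m(x-\theta)}{\sigma}\right)$ be the skew-normal density, regarded as a function of $(\theta,v,m)$ with $v=\sigma^2>0$. Then for all $x,\theta\in\mathbb{R}$, $v>0$, $m\in\mathbb{R}$: $$\frac{\partial^2 f}{\partial\theta^2}-2\frac{\partial f}{\partial v}+\frac{m^3+m}{v}\frac{\partial f}{\partial m}=0,\qquad 2m\frac{\partial f}{\partial m}+(m^2+1)\frac{\partial^2 f}{\partial m^2}+2vm\frac{\partial^2 f}{\partial v\,\partial m}=0.$$
   Context: $\varphi$ is the standard normal density and $\Phi$ the standard normal distribution function. *)

From Stdlib Require Import Reals Lra ClassicalEpsilon.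
Open Scope R_scope.

Definition phi (x : R) : R := exp (- (x ^ 2) / 2) / sqrt (2 * PI).

(* Riemann integral of f from a to b (oriented, as RiemannInt), if integrable;
   chosen classically (value irrelevant otherwise). *)
Definition RInt (f : R -> R) (a b : R) : R :=
  epsilon (inhabits 0)
    (fun l => exists pr : Riemann_integrable f a b, RiemannInt pr = l).

Definition Phi (x : R) : R :=
  epsilon (inhabits 0)
    (fun l => Un_cv (fun n => RInt phi (- INR n) x) l).

Definition skewn (x theta v m : R) : R :=
  2 / sqrt v * phi ((x - theta) / sqrt v) * Phi (m * (x - theta) / sqrt v).

(* Writing z = (x - θ)/√v, the density is f = 2/√v φ(z) Φ(m z).  Since φ'(y) = -y φ(y)
   and Φ' = φ, every partial derivative involved is again of the form
   φ(z) (a Φ(m z) + b φ(m z)) with a, b rational in z, m, √v; the two identities are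
   then equalities of such expressions, checked coefficientwise.  The only analytic
   input is Φ' = φ, which holds because Φ differs from x ↦ ∫_0^x φ by the constant
   lim_n ∫_{-n}^0 φ, a limit that exists since these integrals increase and are
   bounded by ∫_{-∞}^0 e^{1/2 + y} dy (note -y²/2 ≤ 1/2 + y). *)

From Pilot Require Import Defs.
From Stdlib Require Import Reals Lra ClassicalEpsilon.
From Coquelicot Require Import Coquelicot.
Open Scope R_scope.

Lemma is_derive_phi (y : R) : is_derive phi y (- y * phi y).
Proof.
  assert (Hsqrt : sqrt (2 * PI) <> 0).
  { apply Rgt_not_eq, sqrt_lt_R0. generalize PI_RGT_0; lra. }
  unfold phi; auto_derive; [exact I|].
  replace (- (y * (y * 1)) * / 2) with (- y ^ 2 / 2) by field.
  field; exact Hsqrt.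
Qed.

Lemma continuous_phi (y : R) : continuous phi y.
Proof.
  apply (@ex_derive_continuous R_AbsRing R_NormedModule).
  eexists; apply is_derive_phi.
Qed.

Lemma phi_gt0 (y : R) : 0 < phi y.
Proof.
  apply Rdiv_lt_0_compat; [apply exp_pos|].
  apply sqrt_lt_R0; generalize PI_RGT_0; lra.
Qed.

Lemma ex_RInt_phi (a b : R) : ex_RInt phi a b.
Proof.
  apply (@ex_RInt_continuous R_CompleteNormedModule).
  intros; apply continuous_phi.
Qed.

Lemma Defs_RInt_eq (f : R -> R) (a b : R) :
  ex_RInt f a b -> Defs.RInt f a b = RInt f a b.
Proof.
  intro Hf; unfold Defs.RInt.
  destruct (epsilon_spec (inhabits 0)
              (fun l => exists pr : Riemann_integrable f a b, RiemannInt pr = l))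
    as [pr <-].
  - exists (RiemannInt (ex_RInt_Reals_0 _ _ _ Hf)); eauto.
  - symmetry; apply RInt_Reals.
Qed.

Lemma phi_le_exp (y : R) : y <= 0 -> phi y <= exp (/ 2) * exp y.
Proof.
  intro Hy; unfold phi; rewrite <- exp_plus.
  assert (Hsqrt : 1 < sqrt (2 * PI)).
  { rewrite <- sqrt_1; apply sqrt_lt_1_alt; generalize PI2_1; lra. }
  apply Rle_trans with (exp (- y ^ 2 / 2)).
  - unfold Rdiv at 1; rewrite <- (Rmult_1_r (exp _)) at 2.
    apply Rmult_le_compat_l; [left; apply exp_pos|].
    rewrite <- Rinv_1; apply Rinv_le_contravar; lra.
  - assert (Hexp : - y ^ 2 / 2 <= / 2 + y) by (generalize (pow2_ge_0 (y + 1)); lra).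
    destruct Hexp as [Hlt | ->]; [left; apply exp_increasing, Hlt | lra].
Qed.

Lemma RInt_phi_lower_incr :
  Un_growing (fun n => RInt phi (- INR n) 0).
Proof.
  intro n; rewrite S_INR.
  rewrite <- (@RInt_Chasles R_CompleteNormedModule phi (- (INR n + 1)) (- INR n) 0)
    by apply ex_RInt_phi.
  assert (0 <= RInt phi (- (INR n + 1)) (- INR n)).
  { apply RInt_ge_0; [lra | apply ex_RInt_phi | intros; left; apply phi_gt0]. }
  simpl; unfold plus; simpl; lra.
Qed.

Lemma RInt_phi_lower_bounded (n : nat) : RInt phi (- INR n) 0 <= exp (/ 2).
Proof.
  set (g y := exp (/ 2) * exp y).
  assert (Hg : forall y, is_derive g y (g y)) by (intro; unfold g; auto_derive; auto; ring).
  assert (Hgc : forall y, continuous g y)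
    by (intro; apply (@ex_derive_continuous R_AbsRing R_NormedModule); eexists; apply Hg).
  assert (Hn := pos_INR n).
  apply Rle_trans with (RInt g (- INR n) 0).
  - apply RInt_le; [lra | apply ex_RInt_phi | | intros; apply phi_le_exp; lra].
    apply (@ex_RInt_continuous R_CompleteNormedModule); auto.
  - rewrite (is_RInt_unique _ _ _ _ (is_RInt_derive g g _ _ (fun y _ => Hg y) (fun y _ => Hgc y))).
    assert (0 < g (- INR n)) by (apply Rmult_lt_0_compat; apply exp_pos).
    unfold g at 1, minus, plus, opp; simpl; rewrite exp_0; lra.
Qed.

Lemma Phi_RInt : exists L, forall x, Phi x = L + RInt phi 0 x.
Proof.
  destruct (growing_cv _ RInt_phi_lower_incr) as [L HL].
  { exists (exp (/ 2)); intros u [n ->]; apply RInt_phi_lower_bounded. }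
  exists L; intro x.
  assert (Hx : Un_cv (fun n => Defs.RInt phi (- INR n) x) (L + RInt phi 0 x)).
  { intros e He; destruct (HL e He) as [N HN]; exists N; intros n Hn.
    rewrite Defs_RInt_eq by apply ex_RInt_phi.
    rewrite <- (@RInt_Chasles R_CompleteNormedModule phi _ 0 x) by apply ex_RInt_phi.
    unfold R_dist, plus in *; simpl.
    replace (RInt phi (- INR n) 0 + RInt phi 0 x - (L + RInt phi 0 x))
      with (RInt phi (- INR n) 0 - L) by ring.
    auto. }
  apply (UL_sequence _ _ _ (epsilon_spec (inhabits 0) _ (ex_intro _ _ Hx)) Hx).
Qed.

Lemma is_derive_Phi (y : R) : is_derive Phi y (phi y).
Proof.
  destruct Phi_RInt as [L HL].
  apply is_derive_ext with (fun x => L + RInt phi 0 x); [auto|].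
  replace (phi y) with (0 + phi y) by ring.
  apply (@is_derive_plus R_AbsRing R_NormedModule);
    [apply (@is_derive_const R_AbsRing R_NormedModule)|].
  apply (@is_derive_RInt R_CompleteNormedModule phi (fun x => RInt phi 0 x) 0 y).
  - apply filter_forall; intro; apply RInt_correct, ex_RInt_phi.
  - apply continuous_phi.
Qed.

Lemma Derive_phi (y : R) : Derive phi y = - y * phi y.
Proof. apply is_derive_unique, is_derive_phi. Qed.

Lemma Derive_Phi (y : R) : Derive Phi y = phi y.
Proof. apply is_derive_unique, is_derive_Phi. Qed.

Lemma ex_derive_phi (y : R) : ex_derive phi y.
Proof. eexists; apply is_derive_phi. Qed.

Lemma ex_derive_Phi (y : R) : ex_derive Phi y.
Proof. eexists; apply is_derive_Phi. Qed.

Definition zscore (x theta v : R) : R := (x - theta) / sqrt v.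

Definition skewn_dtheta (x theta v m : R) : R :=
  let z := zscore x theta v in
  2 / v * phi z * (z * Phi (m * z) - m * phi (m * z)).

Definition skewn_dv (x theta v m : R) : R :=
  let z := zscore x theta v in
  1 / (sqrt v * v) * phi z * ((z * z - 1) * Phi (m * z) - m * z * phi (m * z)).

Definition skewn_dm (x theta v m : R) : R :=
  let z := zscore x theta v in
  2 / sqrt v * z * phi z * phi (m * z).

Definition skewn_dtheta2 (x theta v m : R) : R :=
  let z := zscore x theta v in
  - 2 / (sqrt v * v) * phi z
    * ((1 - z * z) * Phi (m * z) + (2 * m + m ^ 3) * z * phi (m * z)).

Definition skewn_dm2 (x theta v m : R) : R :=
  - m * (zscore x theta v) ^ 2 * skewn_dm x theta v m.

Definition skewn_dvdm (x theta v m : R) : R :=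
  skewn_dm x theta v m / v * (-1 + (1 + m ^ 2) * (zscore x theta v) ^ 2 / 2).

(* Clearing [sqrt v] and writing [v] as its square lets [field] treat [sqrt v]
   as an independent nonzero unknown. *)
Ltac field_sqrt v Hv :=
  let s := fresh "s" in
  assert (Hsqrt := sqrt_sqrt _ (Rlt_le _ _ Hv));
  assert (Hsqrt0 := Rgt_not_eq _ _ (sqrt_lt_R0 _ Hv));
  set (s := sqrt v) in *; clearbody s; try rewrite <- Hsqrt;
  field; repeat split; exact Hsqrt0.

Ltac unfold_skewn :=
  unfold skewn_dm2, skewn_dvdm, skewn_dtheta2, skewn_dtheta, skewn_dv, skewn_dm,
    skewn, zscore.

Ltac solve_derive_skewn v Hv :=
  unfold_skewn; auto_derive;
  [ repeat first [ split | exact I | apply ex_derive_phi | apply ex_derive_Phi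
                 | exact Hv | apply Rgt_not_eq, Hv | apply Rgt_not_eq, sqrt_lt_R0, Hv ]
  (* [field] sees [phi a], [Phi a] as atoms: reassociating products makes the
     arguments [m * (x - t) / sqrt v] and [m * zscore x t v] syntactically equal. *)
  | rewrite ?Derive_phi, ?Derive_Phi; unfold Rminus, Rdiv; rewrite ?Rmult_assoc;
    field_sqrt v Hv ].

Section Derivatives.

Variables (x theta v m : R).
Hypothesis Hv : 0 < v.

Lemma is_derive_skewn_theta :
  is_derive (fun t => skewn x t v m) theta (skewn_dtheta x theta v m).
Proof. solve_derive_skewn v Hv. Qed.

Lemma is_derive_skewn_v :
  is_derive (fun w => skewn x theta w m) v (skewn_dv x theta v m).
Proof. solve_derive_skewn v Hv. Qed.

Lemma is_derive_skewn_m :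
  is_derive (fun k => skewn x theta v k) m (skewn_dm x theta v m).
Proof. solve_derive_skewn v Hv. Qed.

Lemma is_derive_skewn_dtheta_theta :
  is_derive (fun t => skewn_dtheta x t v m) theta (skewn_dtheta2 x theta v m).
Proof. solve_derive_skewn v Hv. Qed.

Lemma is_derive_skewn_dm_m :
  is_derive (fun k => skewn_dm x theta v k) m (skewn_dm2 x theta v m).
Proof. solve_derive_skewn v Hv. Qed.

Lemma is_derive_skewn_dm_v :
  is_derive (fun w => skewn_dm x theta w m) v (skewn_dvdm x theta v m).
Proof. solve_derive_skewn v Hv. Qed.

Lemma skewn_theta_v_identity :
  skewn_dtheta2 x theta v m - 2 * skewn_dv x theta v m
    + (m ^ 3 + m) / v * skewn_dm x theta v m = 0.
Proof. unfold_skewn; field_sqrt v Hv. Qed.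

Lemma skewn_m_v_identity :
  2 * m * skewn_dm x theta v m + (m ^ 2 + 1) * skewn_dm2 x theta v m
    + 2 * v * m * skewn_dvdm x theta v m = 0.
Proof. unfold_skewn; field_sqrt v Hv. Qed.

End Derivatives.

Theorem lemmaF2 :
  exists ft fv fm ftt fmm fvm : R -> R -> R -> R -> R,
    forall x theta v m : R, 0 < v ->
      derivable_pt_lim (fun t => skewn x t v m) theta (ft x theta v m) /\
      derivable_pt_lim (fun w => skewn x theta w m) v (fv x theta v m) /\
      derivable_pt_lim (fun k => skewn x theta v k) m (fm x theta v m) /\
      derivable_pt_lim (fun t => ft x t v m) theta (ftt x theta v m) /\
      derivable_pt_lim (fun k => fm x theta v k) m (fmm x theta v m) /\
      derivable_pt_lim (fun w => fm x theta w m) v (fvm x theta v m) /\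
      ftt x theta v m - 2 * fv x theta v m
        + (m ^ 3 + m) / v * fm x theta v m = 0 /\
      2 * m * fm x theta v m + (m ^ 2 + 1) * fmm x theta v m
        + 2 * v * m * fvm x theta v m = 0.
Proof.
  exists skewn_dtheta, skewn_dv, skewn_dm, skewn_dtheta2, skewn_dm2, skewn_dvdm.
  intros x theta v m Hv.
  repeat split; try apply is_derive_Reals.
  - exact (is_derive_skewn_theta x theta v m Hv).
  - exact (is_derive_skewn_v x theta v m Hv).
  - exact (is_derive_skewn_m x theta v m Hv).
  - exact (is_derive_skewn_dtheta_theta x theta v m Hv).
  - exact (is_derive_skewn_dm_m x theta v m Hv).
  - exact (is_derive_skewn_dm_v x theta v m Hv).
  - exact (skewn_theta_v_identity x theta v m Hv).
  - exact (skewn_m_v_identity x theta v m Hv).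
Qed.
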